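(* Let $G$ be a finite simple graph that has a $C_3$-free vertex $x$ (i.e. $x$ is non-isolated and lies in no triangle of $G$). Then $G$ is not a universal fixer; that is, there exists a permutation $\pi$ of $V(G)$ such that $\gamma(\pi G)\neq\gamma(G)$.
   Context: For a graph $G$, a set $D\subseteq V(G)$ is dominating if every vertex not in $D$ has a neighbor in $D$; $\gamma(G)$ is the minimum size of a dominating set. Let $G'$ be a disjoint copy of $G$, the copy of $v\in V(G)$ being denoted $v'$. For a bijection $\pi:V(G)\to V(G')$ (equivalently a permutation of $V(G)$), the prism $\pi G$ is the graph with vertex set $V(G)\cup V(G')$ and edge set $E(G)\cup E(G')\cup\{u\pi(u):u\in V(G)\}$. The graph $G$ is a universal fixer if $\gamma(\pi G)=\gamma(G)$ for every bijection $\pi:V(G)\to V(G')$. A non-isolated vertex is $C_3$-free if it belongs to no triangle of $G$. *)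

From mathcomp Require Import all_boot all_fingroup.
Set Implicit Arguments. Unset Strict Implicit. Unset Printing Implicit Defensive.

Definition simple_graph (V : finType) (adj : rel V) : Prop :=
  symmetric adj /\ irreflexive adj.

Definition dominating (V : finType) (adj : rel V) (D : {set V}) : bool :=
  [forall v, (v \notin D) ==> [exists u in D, adj v u]].

(* Domination number: minimum size of a dominating set (setT is always one,
   so the default #|V| is never smaller than the true minimum). *)
Definition gamma (V : finType) (adj : rel V) : nat :=
  \big[minn/#|V|]_(D : {set V} | dominating adj D) #|D|.

(* The prism pi G on V(G) + V(G'): inl v is v, inr v is the copy v'. *)
Definition prism (T : finType) (e : rel T) (p : {perm T}) : rel (T + T) :=
  fun a b =>
    match a, b with
    | inl u, inl v => e u v
    | inr u, inr v => e u v
    | inl u, inr w => w == p u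
    | inr w, inl u => w == p u
    end.

Definition C3_free (T : finType) (e : rel T) (x : T) : Prop :=
  (exists y, e x y) /\ ~ (exists y z, [&& e x y, e y z & e x z]).

Definition universal_fixer (T : finType) (e : rel T) : Prop :=
  forall p : {perm T}, gamma (prism e p) = gamma e.

From mathcomp Require Import all_boot all_fingroup.
From mathcomp Require Import zify.
Set Implicit Arguments. Unset Strict Implicit. Unset Printing Implicit Defensive.

(* The witness permutation [rotation] cyclically shifts the closed
   neighbourhood x, y_1, ..., y_k of x (x -> y_1 -> ... -> y_k -> x) and fixes
   every other vertex.  Suppose gamma(pi G) = gamma(G) and let D be a
   dominating set of the prism of size gamma(G).  Its two sides P (in G) and
   D' (in G') are such that P together with the preimage A of D' dominates G,
   and D' together with the image of P dominates G'.  Since |P| + |A| <=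
   gamma(G), the pair (P, A) is a [tight_split]: A is disjoint from P and no
   vertex of A has a neighbour in P or A, while P dominates everything outside
   P and A.  Pulled back to G along pi, the copy side gives a second tight
   split with the roles of P and A exchanged, for the rotated adjacency
   u ~ v iff pi u ~ pi v. *)

Lemma bigminn_le (I : eqType) (r : seq I) (P : pred I) (F : I -> nat) n i :
  i \in r -> P i -> \big[minn/n]_(j <- r | P j) F j <= F i.
Proof.
elim: r => // a r IH; rewrite inE big_cons => /orP[/eqP<- ->|ir Pi].
  exact: geq_minl.
case: (P a); last exact: IH.
exact: leq_trans (geq_minr _ _) (IH ir Pi).
Qed.

Section Domination.
Variables (V : finType) (adj : rel V).

Lemma dominatingP (D : {set V}) :
  reflect (forall v, v \notin D -> exists2 u, u \in D & adj v u)
          (dominating adj D).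
Proof.
apply: (iffP forallP) => [dD v vD | dD v].
  by have /existsP[u /andP[uD vu]] := implyP (dD v) vD; exists u.
by apply/implyP => /dD[u uD vu]; apply/existsP; exists u; rewrite uD.
Qed.

Lemma gamma_min (D : {set V}) : dominating adj D -> gamma adj <= #|D|.
Proof. by move=> dD; apply: bigminn_le; rewrite ?mem_index_enum. Qed.

Lemma gamma_attained : exists2 D : {set V}, dominating adj D & #|D| = gamma adj.
Proof.
apply: (big_ind (fun n => exists2 D : {set V}, dominating adj D & #|D| = n)).
- by exists setT; [apply/dominatingP => v; rewrite in_setT | exact: cardsT].
- move=> _ _ [D1 dD1 <-] [D2 dD2 <-].
  by case: (leqP #|D1| #|D2|) => _; [exists D1 | exists D2].
- by move=> D dD; exists D.
Qed.

End Domination.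

Section TightSplit.
Variable T : finType.

(* This is the shape forced on the
   two halves of a dominating set of the prism of size gamma(G). *)
Definition tight_split (e : rel T) (X Y : {set T}) : Prop :=
  (forall v, v \in Y -> v \notin X /\ forall u, e v u -> u \notin X /\ u \notin Y)
  /\ (forall v, v \notin X -> v \notin Y -> exists2 u, u \in X & e v u).

(* If X dominates outside X and Y and |X| + |Y| <= gamma, then X :|: Y is a
   minimum dominating set of size |X| + |Y|; so X and Y are disjoint and no
   vertex of Y can be dropped, i.e. no vertex of Y has a neighbour in X :|: Y. *)
Lemma tight_split_of_card (e : rel T) (X Y : {set T}) :
  irreflexive e -> #|X| + #|Y| <= gamma e ->
  (forall v, v \notin X -> v \notin Y -> exists2 u, u \in X & e v u) ->
  tight_split e X Y.
Proof.
move=> e_irr small domX; split=> // v vY.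
have domXY : dominating e (X :|: Y).
  apply/dominatingP => w; rewrite in_setU negb_or => /andP[wX wY].
  by have [u uX wu] := domX w wX wY; exists u; rewrite ?in_setU ?uX.
have minXY := gamma_min domXY.
have cardXY : #|X :|: Y| = #|X| + #|Y|.
  by apply/eqP; rewrite eqn_leq leq_card_setU; exact: leq_trans small minXY.
have disjXY : [disjoint X & Y] by rewrite -(leq_card_setU X Y).2 cardXY.
have vX : v \notin X by rewrite (disjointFl disjXY).
split=> // u vu; apply/andP; rewrite -negb_or -in_setU; apply/negP => uXY.
have domXYv : dominating e ((X :|: Y) :\ v).
  apply/dominatingP => w; rewrite in_setD1 negb_and negbK => /orP[/eqP-> | wXY].
    exists u => //; rewrite in_setD1 uXY andbT.
    by apply: contraTneq vu => ->; rewrite e_irr.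
  move: wXY; rewrite in_setU negb_or => /andP[wX wY].
  have [u' u'X wu'] := domX w wX wY; exists u' => //.
  by rewrite in_setD1 in_setU u'X andbT; apply: contraNneq vX => <-.
have := gamma_min domXYv; rewrite (cardsD1 v) in_setU vY orbT in cardXY; lia.
Qed.

Lemma tight_split_perm (e : rel T) (p : {perm T}) (X Y : {set T}) :
  tight_split e X Y ->
  tight_split (fun v u => e (p v) (p u)) (p @^-1: X) (p @^-1: Y).
Proof.
move=> [isoY domX]; split=> v; rewrite !inE.
  by move=> /isoY[vX near]; split=> // u /near; rewrite !inE.
by move=> vX vY; have [u uX vu] := domX _ vX vY; exists (p^-1 u)%g; rewrite ?inE permKV.
Qed.

End TightSplit.

Section PrismSides.
Variables (T : finType) (e : rel T) (p : {perm T}) (D : {set T + T}).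
Hypothesis domD : dominating (prism e p) D.

Definition left_side : {set T} := [set v | inl v \in D].
Definition right_side : {set T} := [set v | inr v \in D].

Lemma card_sides : #|left_side| + #|right_side| = #|D|.
Proof. by rewrite -!sum1dep_card -sum1_card big_sumType. Qed.

Lemma left_side_dominates w :
  w \notin left_side -> w \notin p @^-1: right_side ->
  exists2 u, u \in left_side & e w u.
Proof.
rewrite !inE => wL wR; have [[u|u] uD wu] := dominatingP _ _ domD (inl w) wL.
  by exists u; rewrite ?inE.
by move: wR; rewrite -(eqP wu) uD.
Qed.

Lemma right_side_dominates w :
  w \notin right_side -> w \notin p @: left_side ->
  exists2 u, u \in right_side & e w u.
Proof.
rewrite inE => wR wL; have [[u|u] uD wu] := dominatingP _ _ domD (inr w) wR.
  by move: wL; rewrite (eqP wu) imset_f ?inE.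
by exists u; rewrite ?inE.
Qed.

Lemma prism_tight_splits :
  irreflexive e -> #|D| <= gamma e ->
  tight_split e left_side (p @^-1: right_side) /\
  tight_split (fun v u => e (p v) (p u)) (p @^-1: right_side) left_side.
Proof.
move=> e_irr small; have cardD := card_sides.
have cardR : #|p @^-1: right_side| = #|right_side| by apply/card_preimset/perm_inj.
have cardL : #|p @: left_side| = #|left_side| by apply/card_imset/perm_inj.
split; first by apply: tight_split_of_card left_side_dominates => //; lia.
have -> : left_side = p @^-1: (p @: left_side).
  by apply/setP => v; rewrite [RHS]inE mem_imset //; exact: perm_inj.
by apply/tight_split_perm/tight_split_of_card/right_side_dominates => //; lia.
Qed.

End PrismSides.

Lemma fpath_back_ind (T : eqType) (f : T -> T) (N Q : pred T) a r :
  fpath f a r -> all N r -> (forall z, N (f z) -> Q (f z) -> Q z) ->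
  Q (last a r) -> all Q (a :: r).
Proof.
move=> + + step; elim: r a => [|b r IH] a; first by rewrite /= andbT.
move=> /andP[/eqP fab pth] /andP[Nb Nr] Qlast.
have Qbr := IH b pth Nr Qlast; apply/andP; split=> //.
by apply: step; rewrite fab //; case/andP: Qbr.
Qed.

Section Rotation.
Variables (T : finType) (e : rel T) (x : T).
Hypotheses (e_sym : symmetric e) (e_irr : irreflexive e).

Definition nbhd : seq T := [seq v <- enum T | e x v].

Lemma mem_nbhd v : (v \in nbhd) = e x v.
Proof. by rewrite mem_filter mem_enum andbT. Qed.

Lemma mem_closed_nbhd v : (v \in x :: nbhd) = (v == x) || e x v.
Proof. by rewrite inE mem_nbhd. Qed.

Lemma closed_nbhd_uniq : uniq (x :: nbhd).
Proof. by rewrite /= mem_nbhd e_irr filter_uniq ?enum_uniq. Qed.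

Definition rotation : {perm T} := perm (can_inj (prev_next closed_nbhd_uniq)).

Lemma rotationE v : rotation v = next (x :: nbhd) v.
Proof. by rewrite permE. Qed.

Lemma rotation_fix v : v != x -> ~~ e x v -> rotation v = v.
Proof.
by move=> vx xv; rewrite rotationE next_nth mem_closed_nbhd (negbTE vx) (negbTE xv).
Qed.

Lemma rotation_closed_nbhd v : (rotation v \in x :: nbhd) = (v \in x :: nbhd).
Proof. by rewrite rotationE mem_next. Qed.

Lemma rotation_cycle : fpath rotation x nbhd /\ rotation (last x nbhd) = x.
Proof.
have /= := cycle_next closed_nbhd_uniq; rewrite rcons_path => /andP[pth /eqP lst].
by split; [apply: sub_path pth => a b; rewrite /= rotationE | rewrite rotationE].
Qed.

Lemma rotation_back_ind (Q : pred T) :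
  (forall z, e x (rotation z) -> Q (rotation z) -> Q z) ->
  Q (last x nbhd) -> forall y, e x y -> Q y.
Proof.
move=> step Qlast y; rewrite -mem_nbhd => ny.
have /allP := fpath_back_ind rotation_cycle.1 (filter_all _ _) step Qlast.
by apply; rewrite inE ny orbT.
Qed.

Hypothesis x_C3 : C3_free e x.

Lemma x_no_triangle a b : e x a -> e a b -> e x b -> False.
Proof. by move=> xa ab xb; case: x_C3 => _; apply; exists a, b; rewrite xa ab xb. Qed.

Lemma nbhd_nonempty : nbhd != [::].
Proof. by case: x_C3 => [[y xy] _]; apply/eqP => nb; move: (mem_nbhd y); rewrite nb xy. Qed.

Lemma rotation_x : e x (rotation x).
Proof.
have [pth _] := rotation_cycle; have := mem_nbhd; have := nbhd_nonempty.
by case: nbhd pth => [|y ys] //= /andP[/eqP-> _] _ <-; rewrite mem_head.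
Qed.

Lemma last_nbhd : e x (last x nbhd).
Proof.
have := mem_nbhd; have := nbhd_nonempty.
by case: nbhd => [|y ys] //= _ <-; rewrite mem_last.
Qed.

Section NoDoubleSplit.
Variables P A : {set T}.
Hypotheses (splitG : tight_split e P A)
  (splitR : tight_split (fun v u => e (rotation v) (rotation u)) A P).

Let free v := (v \notin P) && (v \notin A).

(* If x is not in P, freedom passes from a neighbour rotation z of x to z:
   the P-vertex w dominating rotation z is not adjacent to x (no triangle),
   hence fixed by the rotation, and its rotated neighbourhood contains z. *)
Lemma free_back : x \notin P ->
  forall z, e x (rotation z) -> free (rotation z) -> free z.
Proof.
move=> xP z xz /andP[zP zA]; have [w wP zw] := splitG.2 _ zP zA.
have wx : w != x by apply: contraNneq xP => <-.
have xw : ~~ e x w by apply/negP => xw; exact: x_no_triangle xz zw xw.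
have [_ nearw] := splitR.1 w wP.
have /nearw[zA' zP'] : e (rotation w) (rotation z) by rewrite rotation_fix // e_sym.
by rewrite /free zA' zP'.
Qed.

(* A vertex of A whose rotation is adjacent to a vertex of P lies in the
   closed neighbourhood of x, since outside it the rotation is the identity. *)
Lemma A_near_P z w :
  z \in P -> w \in A -> e z (rotation w) -> w \in x :: nbhd.
Proof.
move=> zP wA; apply: contraTT; rewrite mem_closed_nbhd negb_or => /andP[wx xw].
rewrite rotation_fix //; apply/negP => zw.
have [_ nearw] := splitG.1 w wA.
have /nearw[zP' _] : e w z by rewrite e_sym.
by rewrite zP in zP'.
Qed.

(* x is not in P: otherwise the last neighbour z, whose rotation is x, is
   free by the rotated split and so has a rotated neighbour w in A; then w lies
   in the closed neighbourhood of x, next to the P-vertex x. *)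
Lemma x_notin_P : x \notin P.
Proof.
apply/negP => xP; have [_ zx] := rotation_cycle; set z := last x nbhd in zx.
have [_ nearx] := splitR.1 x xP.
have /nearx[zA zP] : e (rotation x) (rotation z) by rewrite zx e_sym rotation_x.
have [w wA xw] := splitR.2 z zA zP; rewrite zx in xw.
have [wP nearw] := splitG.1 w wA.
have := A_near_P xP wA xw; rewrite mem_closed_nbhd => /orP[/eqP wx | x'w].
  by rewrite wx xP in wP.
have /nearw[xP' _] : e w x by rewrite e_sym.
by rewrite xP in xP'.
Qed.

(* x is not in A: its neighbour rotation x would be free, hence so would x. *)
Lemma x_notin_A : x \notin A.
Proof.
apply/negP => xA; have [_ /(_ _ rotation_x) [rxP rxA]] := splitG.1 x xA.
have := free_back x_notin_P rotation_x.
by rewrite /free rxP rxA xA andbF; move/(_ isT).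
Qed.

(* The last neighbour y of x (the one rotated onto x) is not in P: its
   rotation predecessor u is free, so u has a rotated neighbour w in A, and
   rotation w, adjacent to y, can be neither x nor a neighbour of x. *)
Lemma last_nbhd_notin_P : last x nbhd \notin P.
Proof.
have [_ yx] := rotation_cycle; have xy := last_nbhd.
move: (last x nbhd) xy yx => y xy yx; apply/negP => yP.
have [_ neary] := splitR.1 y yP.
have /neary[uA uP] : e (rotation y) (rotation (rotation^-1 y)%g).
  by rewrite permKV yx.
have [w wA yw] := splitR.2 _ uA uP; rewrite permKV in yw.
have [wP _] := splitG.1 w wA.
have := A_near_P yP wA yw.
rewrite -rotation_closed_nbhd mem_closed_nbhd => /orP[/eqP wx | xw].
  have wy : w = y by apply: (@perm_inj _ rotation); rewrite wx yx.
  by rewrite wy yP in wP.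
exact: x_no_triangle xy yw xw.
Qed.

(* Any other neighbour y of x is not in P: the rotated split makes the last
   neighbour free, and freedom propagates back along the rotation to y. *)
Lemma nbhd_notin_P y : e x y -> rotation y != x -> y \notin P.
Proof.
move=> xy yx; apply/negP => yP; have [_ zx] := rotation_cycle.
have : rotation y \in x :: nbhd by rewrite rotation_closed_nbhd mem_closed_nbhd xy orbT.
rewrite mem_closed_nbhd (negbTE yx) /= => xry.
have [_ neary] := splitR.1 y yP.
have /neary[zA zP] : e (rotation y) (rotation (last x nbhd)) by rewrite zx e_sym.
have zfree : free (last x nbhd) by apply/andP.
have := rotation_back_ind (free_back x_notin_P) zfree xy.
by rewrite /free yP.
Qed.

(* Finally x, being in neither P nor A, has a neighbour in P: impossible. *)
Lemma no_double_split : False.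
Proof.
have [y yP xy] := splitG.2 x x_notin_P x_notin_A.
case: (eqVneq (rotation y) x) => [yx | yx].
  have [_ zx] := rotation_cycle.
  have y_last : y = last x nbhd by apply: (@perm_inj _ rotation); rewrite yx zx.
  by rewrite y_last (negbTE last_nbhd_notin_P) in yP.
by rewrite (negbTE (nbhd_notin_P xy yx)) in yP.
Qed.

End NoDoubleSplit.
End Rotation.

Theorem theorem2 (T : finType) (e : rel T) (x : T) :
  simple_graph e -> C3_free e x ->
  ~ universal_fixer e /\ (exists p : {perm T}, gamma (prism e p) <> gamma e).
Proof.
move=> [e_sym e_irr] x_C3.
suff [p gamma_p] : exists p : {perm T}, gamma (prism e p) <> gamma e.
  by split=> [fixer | ]; [exact: gamma_p (fixer p) | exists p].
exists (rotation x e_irr) => gamma_eq.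
have [D domD cardD] := gamma_attained (prism e (rotation x e_irr)).
have [splitG splitR] :=
  prism_tight_splits domD e_irr (eq_leq (etrans cardD gamma_eq)).
exact: (no_double_split e_sym x_C3 splitG splitR).
Qed.
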